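(* Let $\alpha>0$, $\hbar>0$, $\sigma>0$ and let $n\geq 2$ be an integer. Define $$\psi_n(p)=N_G\,\Theta(-p)\,p^{n}e^{-\frac{p^{2}}{2\sigma^{2}}},\qquad N_G=\sqrt{\frac{2}{\sigma^{2n+1}\Gamma\left(n+\frac12\right)}},$$ where $\Theta$ is the Heaviside step function (so $\int_{\mathbb{R}}\psi_n^2\,dp=1$), and for $\tau\in\mathbb{R}$ let $$\mathcal{A}_n(\tau)=4\pi\int_{\mathbb{R}}dp\,\frac{\alpha^{4}}{p^{4}}\tau^{2}\,\psi_n(p)^{2}+4\pi\hbar^{2}\int_{\mathbb{R}}dp\,\left(\frac{d\psi_n(p)}{dp}\right)^{2}.$$ Then $\mathcal{A}_n(\tau)$ is finite for every $\tau$, attains its minimum over $\tau\in\mathbb{R}$ at $\tau=0$, and $$\mathcal{A}_n(0)=\frac{4\pi\hbar^{2}}{\sigma^{2}}\left(\frac{4n-1}{4n-2}\right)=4\pi(\Delta a)^{2},$$ where $(\Delta a)^2=\langle\hat a^2\rangle-\langle\hat a\rangle^2$ is the variance of the operator $\hat a=i\hbar\,\frac{d}{dp}$ in the state $\psi_n$, for which $\langle \hat a\rangle=\int\psi_n\, i\hbar\psi_n'\,dp=0$ and $\Delta a=\frac{\hbar}{\sigma}\sqrt{\frac{4n-1}{4n-2}}$.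
   Context: $\mathcal{A}_n(\tau)$ is the expectation value of the gauge-invariant area of 2-spheres in the Schwarzschild interior at relational time $\tau$ with clock operator $\hat T=\hat b$, evaluated on the Gaussian-type physical state $\psi_n(p_a)$; $\hat a$ is the areal-radius variable in momentum representation. *)

From Stdlib Require Import Reals.
From Coquelicot Require Import Coquelicot.
Open Scope R_scope.

Definition Gamma (s : R) : R :=
  RInt_gen (fun t => Rpower t (s - 1) * exp (- t)) (at_right 0) (Rbar_locally p_infty).

(* Heaviside step function (value at 0 irrelevant here: it multiplies p^n). *)
Definition Heaviside (x : R) : R := if Rlt_dec 0 x then 1 else 0.

Definition int_R (f : R -> R) : R :=
  RInt_gen f (Rbar_locally m_infty) (Rbar_locally p_infty).
Definition ex_int_R (f : R -> R) : Prop :=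
  ex_RInt_gen f (Rbar_locally m_infty) (Rbar_locally p_infty).

Definition N_G (sigma : R) (n : nat) : R :=
  sqrt (2 / (sigma ^ (2 * n + 1) * Gamma (INR n + 1 / 2))).

Definition psi (sigma : R) (n : nat) (p : R) : R :=
  N_G sigma n * Heaviside (- p) * p ^ n * exp (- p ^ 2 / (2 * sigma ^ 2)).

Definition A_integrand1 (alpha sigma : R) (n : nat) (tau p : R) : R :=
  alpha ^ 4 / p ^ 4 * tau ^ 2 * (psi sigma n p) ^ 2.
Definition A_integrand2 (sigma : R) (n : nat) (p : R) : R :=
  (Derive (psi sigma n) p) ^ 2.

Definition A_n (alpha hbar sigma : R) (n : nat) (tau : R) : R :=
  4 * PI * int_R (A_integrand1 alpha sigma n tau)
  + 4 * PI * hbar ^ 2 * int_R (A_integrand2 sigma n).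

(* a-hat = i hbar d/dp acting on the real state psi_n *)
Definition expect_a (hbar sigma : R) (n : nat) : C :=
  (0, hbar * int_R (fun p => psi sigma n p * Derive (psi sigma n) p)).
(* <a^2> = int psi (i hbar)^2 psi'' dp = - hbar^2 int psi psi'' dp *)
Definition expect_a2 (hbar sigma : R) (n : nat) : C :=
  (- hbar ^ 2 * int_R (fun p => psi sigma n p * Derive (Derive (psi sigma n)) p), 0).
Definition Delta_a_sq (hbar sigma : R) (n : nat) : C :=
  Cminus (expect_a2 hbar sigma n) (Cmult (expect_a hbar sigma n) (expect_a hbar sigma n)).

From Stdlib Require Import Reals Lra Lia.
From Coquelicot Require Import Coquelicot.
Open Scope R_scope.

(** The state vanishes for p > 0, and for p < 0 every integrand is N_G^2 times a combination
    of the Gaussian moments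
      int_{-oo}^0 p^(2k) exp (- p^2 / sigma^2) dp = sigma^(2k+1) K_k,
      K_k = int_0^oo u^(2k) exp (- u^2) du.
    Integrating the derivative of u^(2k+1) exp (- u^2) gives K_(k+1) = (2k+1)/2 K_k, and the
    substitution t = u^2 gives Gamma (k + 1/2) = 2 K_k, so that N_G^2 sigma^(2n+1) K_n = 1.
    Expanded in moments and reduced by the recursion, int psi'^2 and - int psi psi'' both equal
    (4n-1) / ((4n-2) sigma^2); int psi psi' = 0 because psi psi' = (psi^2)'/2; and the
    tau-dependent part of A_n is tau^2 times a nonnegative constant. *)

(** * Improper integrals on half-lines *)

Lemma is_RInt_gen_lim_lower (F : (R -> Prop) -> Prop) {FF : Filter F} (f : R -> R) (b l : R) :
  F (fun a => ex_RInt f a b) -> filterlim (fun a => RInt f a b) F (locally l) ->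
  is_RInt_gen f F (at_point b) l.
Proof.
  intros Hex Hlim P HP.
  apply Filter_prod with (fun a => ex_RInt f a b /\ P (RInt f a b)) (fun y => y = b).
  - apply filter_and; [exact Hex | exact (Hlim _ HP)].
  - reflexivity.
  - intros a y [Ha HPa] ->. exists (RInt f a b). split; [exact (RInt_correct _ _ _ Ha) | exact HPa].
Qed.

Lemma is_RInt_gen_lim_upper (F : (R -> Prop) -> Prop) {FF : Filter F} (f : R -> R) (a l : R) :
  F (fun b => ex_RInt f a b) -> filterlim (fun b => RInt f a b) F (locally l) ->
  is_RInt_gen f (at_point a) F l.
Proof.
  intros Hex Hlim P HP.
  apply Filter_prod with (fun x => x = a) (fun b => ex_RInt f a b /\ P (RInt f a b)).
  - reflexivity.
  - apply filter_and; [exact Hex | exact (Hlim _ HP)].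
  - intros x b -> [Hb HPb]. exists (RInt f a b). split; [exact (RInt_correct _ _ _ Hb) | exact HPb].
Qed.

Lemma RInt_nonneg_bounded_cvg (f : R -> R) (a M : R) :
  (forall x, a <= x -> continuous f x) -> (forall x, a <= x -> 0 <= f x) ->
  (forall b, a <= b -> RInt f a b <= M) ->
  exists l, filterlim (RInt f a) (Rbar_locally p_infty) (locally l)
            /\ forall b, a <= b -> RInt f a b <= l.
Proof.
  intros Hcont Hpos Hbound.
  assert (Hex : forall b c, a <= b <= c -> ex_RInt f b c).
  { intros b c Hbc. apply (ex_RInt_continuous (V := R_CompleteNormedModule)).
    intros x Hx. apply Hcont. rewrite Rmin_left in Hx; lra. }
  assert (Hmono : forall b c, a <= b <= c -> RInt f a b <= RInt f a c).
  { intros b c Hbc. rewrite <- (RInt_Chasles f a b c) by (apply Hex; lra).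
    assert (0 <= RInt f b c) by (apply RInt_ge_0; [lra | apply Hex; lra | intros; apply Hpos; lra]).
    unfold plus; simpl. lra. }
  set (E := fun y => exists b, a <= b /\ y = RInt f a b).
  destruct (completeness E) as [l [Hub Hlub]].
  { exists M. intros y [b [Hb ->]]. now apply Hbound. }
  { exists (RInt f a a), a. split; [lra | reflexivity]. }
  assert (Hle : forall b, a <= b -> RInt f a b <= l) by (intros b Hb; apply Hub; now exists b).
  exists l. split; [|exact Hle].
  apply filterlim_locally. intros eps.
  assert (Hnear : exists b, a <= b /\ l - eps < RInt f a b).
  { apply Classical_Prop.NNPP. intros Hfar.
    assert (l <= l - eps); [|destruct eps; simpl in *; lra].
    apply Hlub. intros y [b [Hb ->]]. apply Rnot_lt_le. intros Hlt. apply Hfar. now exists b. }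
  destruct Hnear as [b0 [Hb0 Hlt]].
  exists b0. intros b Hb.
  assert (RInt f a b <= l) by (apply Hle; lra).
  assert (RInt f a b0 <= RInt f a b) by (apply Hmono; lra).
  apply Rabs_def1; destruct eps; simpl in *; unfold minus, plus, opp; simpl; lra.
Qed.

Lemma is_RInt_gen_ext_lt (f g : R -> R) (b l : R) :
  (forall p, p < b -> f p = g p) ->
  is_RInt_gen f (Rbar_locally m_infty) (at_point b) l ->
  is_RInt_gen g (Rbar_locally m_infty) (at_point b) l.
Proof.
  intros Hfg. apply is_RInt_gen_ext.
  apply Filter_prod with (fun a => a < b) (fun y => y = b); [now exists b | reflexivity |].
  intros a y Ha -> x Hx. simpl in Hx. rewrite Rmin_left, Rmax_right in Hx by lra. apply Hfg. lra.
Qed.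

Lemma is_RInt_gen_Derive_m_infty (f df : R -> R) (la b : R) :
  (forall x, is_derive f x (df x)) -> (forall x, continuous df x) ->
  is_lim f m_infty la ->
  is_RInt_gen df (Rbar_locally m_infty) (at_point b) (f b - la).
Proof.
  intros Hd Hc Hlim.
  assert (HDf : forall x, Derive f x = df x) by (intros x; apply is_derive_unique, Hd).
  apply (is_RInt_gen_ext (Derive f)); [apply filter_forall; intros ab x _; apply HDf |].
  apply is_RInt_gen_Derive.
  - apply filter_forall. intros ab x _. eexists. apply Hd.
  - apply filter_forall. intros ab x _.
    apply (continuous_ext df); [intros; now rewrite HDf | apply Hc].
  - exact Hlim.
  - intros P HP. exact (locally_singleton _ _ HP).
Qed.

Lemma is_RInt_gen_zero (Fa Fb : (R -> Prop) -> Prop) {FFa : Filter Fa} {FFb : Filter Fb} :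
  is_RInt_gen (fun _ => 0) Fa Fb 0.
Proof.
  intros P HP. unfold filtermapi. apply filter_forall. intros ab.
  exists 0. split; [| apply locally_singleton, HP].
  assert (Hconst := is_RInt_const (V := R_NormedModule) (fst ab) (snd ab) 0).
  change (scal ?k ?v) with (k * v) in Hconst. now rewrite Rmult_0_r in Hconst.
Qed.

Lemma int_R_supported_neg (f : R -> R) (l : R) :
  is_RInt_gen f (Rbar_locally m_infty) (at_point 0) l ->
  (forall p, 0 < p -> f p = 0) ->
  int_R f = l /\ ex_int_R f.
Proof.
  intros Hneg Hpos.
  assert (Hright : is_RInt_gen f (at_point 0) (Rbar_locally p_infty) 0).
  { apply (is_RInt_gen_ext (fun _ => 0)); [| exact (is_RInt_gen_zero _ _)].
    apply Filter_prod with (fun x => x = 0) (fun b => 0 < b); [reflexivity | now exists 0 |].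
    intros x b -> Hb y Hy. simpl in Hy. rewrite Rmin_left, Rmax_right in Hy by lra.
    symmetry. apply Hpos. lra. }
  assert (Hline := is_RInt_gen_Chasles _ _ _ _ Hneg Hright).
  change (plus l 0) with (l + 0) in Hline. rewrite Rplus_0_r in Hline.
  split; [apply is_RInt_gen_unique; exact Hline | now exists l].
Qed.

Lemma pow_div_fact_le_exp (x : R) (j : nat) :
  0 <= x -> x ^ j / INR (Factorial.fact j) <= exp x.
Proof.
  intros Hx. eapply Rle_trans; [| exact (exp_ge_taylor x j Hx)].
  assert (Hterm : forall i, 0 <= x ^ i / INR (Factorial.fact i)).
  { intros i. apply Rmult_le_pos; [now apply pow_le |].
    apply Rlt_le, Rinv_0_lt_compat, INR_fact_lt_0. }
  destruct j as [|j]; [simpl; lra |].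
  rewrite tech5. assert (0 <= sum_f_R0 (fun i => x ^ i / INR (Factorial.fact i)) j)
    by (apply cond_pos_sum; auto).
  lra.
Qed.

Lemma pow_mul_exp_sq_le (c t : R) (k : nat) : 0 < c -> 1 <= t ->
  t ^ k * exp (- (c * t ^ 2)) <= INR (Factorial.fact (S k)) / c ^ S k / t.
Proof.
  intros Hc Ht.
  set (F := INR (Factorial.fact (S k))).
  assert (HF : 0 < F) by apply INR_fact_lt_0.
  assert (Hck : 0 < c ^ S k) by (apply pow_lt; lra).
  assert (Htk : 0 < t ^ k) by (apply pow_lt; lra).
  assert (Htk1 : 1 <= t ^ S k) by (apply pow_R1_Rle; lra).
  assert (Htaylor : c ^ S k * (t ^ k * t * t ^ S k) / F <= exp (c * t ^ 2)).
  { replace (c ^ S k * (t ^ k * t * t ^ S k)) with ((c * t ^ 2) ^ S k).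
    - apply pow_div_fact_le_exp. apply Rmult_le_pos; [lra | apply pow2_ge_0].
    - rewrite Rpow_mult_distr, <- pow_mult. f_equal.
      replace (2 * S k)%nat with (k + 1 + S k)%nat by lia. now rewrite !pow_add, pow_1. }
  rewrite exp_Ropp.
  apply (Rmult_le_reg_r (exp (c * t ^ 2) * t)); [apply Rmult_lt_0_compat; [apply exp_pos | lra] |].
  replace (t ^ k * / exp (c * t ^ 2) * (exp (c * t ^ 2) * t)) with (t ^ k * t)
    by (field; apply Rgt_not_eq, exp_pos).
  replace (F / c ^ S k / t * (exp (c * t ^ 2) * t)) with (F / c ^ S k * exp (c * t ^ 2))
    by (field; lra).
  apply Rle_trans with (F / c ^ S k * (c ^ S k * (t ^ k * t * t ^ S k) / F)).
  - replace (F / c ^ S k * (c ^ S k * (t ^ k * t * t ^ S k) / F)) with (t ^ k * t * t ^ S k)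
      by (field; lra).
    rewrite <- (Rmult_1_r (t ^ k * t)) at 1. apply Rmult_le_compat_l; [nra | exact Htk1].
  - apply Rmult_le_compat_l; [apply Rlt_le, Rdiv_lt_0_compat; lra | exact Htaylor].
Qed.

Lemma is_lim_pow_mul_exp_sq_m_infty (c : R) (k : nat) : 0 < c ->
  is_lim (fun p => p ^ k * exp (- (c * p ^ 2))) m_infty 0.
Proof.
  intros Hc.
  set (C := INR (Factorial.fact (S k)) / c ^ S k).
  assert (Hbound : Rbar_locally m_infty (fun p => Rabs (p ^ k * exp (- (c * p ^ 2))) <= C / - p)).
  { exists (-1). intros p Hp.
    rewrite Rabs_mult, <- RPow_abs, (Rabs_pos_eq (exp _)) by apply Rlt_le, exp_pos.
    rewrite <- pow2_abs, Rabs_left by lra. apply pow_mul_exp_sq_le; lra. }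
  assert (Hdecay : is_lim (fun p => C / - p) m_infty 0).
  { replace (Finite 0) with (Rbar_mult C (Rbar_inv (Rbar_opp m_infty))) by (simpl; f_equal; ring).
    apply is_lim_scal_l, is_lim_inv; [apply is_lim_opp, is_lim_id | discriminate]. }
  apply (filterlim_le_le (fun p => - (C / - p)) _ (fun p => C / - p)).
  - apply (filter_imp _ _ (fun p H => proj1 (Rabs_le_between _ _) H) Hbound).
  - replace (Finite 0) with (Rbar_opp 0) by (simpl; f_equal; ring). now apply is_lim_opp.
  - exact Hdecay.
Qed.

(** * Gaussian moments *)

Definition gauss_pow (s : R) (k : nat) (p : R) : R := p ^ (2 * k) * exp (- (p ^ 2 / s ^ 2)).

Lemma gauss_pow_continuous (s : R) (k : nat) (p : R) : continuous (gauss_pow s k) p.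
Proof.
  apply (ex_derive_continuous (V := R_NormedModule)). unfold gauss_pow. auto_derive. auto.
Qed.

Lemma ex_RInt_gauss_pow (s : R) (k : nat) (a b : R) : ex_RInt (gauss_pow s k) a b.
Proof.
  apply (ex_RInt_continuous (V := R_CompleteNormedModule)). intros; apply gauss_pow_continuous.
Qed.

Lemma gauss_pow_ge_0 (s : R) (k : nat) (p : R) : 0 <= gauss_pow s k p.
Proof.
  unfold gauss_pow. apply Rmult_le_pos; [| apply Rlt_le, exp_pos].
  rewrite pow_mult. apply pow_le, pow2_ge_0.
Qed.

Lemma gauss_pow_opp (s : R) (k : nat) (p : R) : gauss_pow s k (- p) = gauss_pow s k p.
Proof. unfold gauss_pow. rewrite !pow_mult. now replace ((- p) ^ 2) with (p ^ 2) by ring. Qed.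

Lemma gauss_pow_scale (s : R) (k : nat) (p : R) : s <> 0 ->
  gauss_pow s k p = s ^ (2 * k) * gauss_pow 1 k (p / s).
Proof.
  intros Hs. unfold gauss_pow. rewrite !pow_mult, <- Rmult_assoc, <- Rpow_mult_distr.
  replace ((p / s) ^ 2) with (p ^ 2 / s ^ 2) by (field; auto).
  replace (s ^ 2 * (p ^ 2 / s ^ 2)) with (p ^ 2) by (field; auto).
  now replace (p ^ 2 / s ^ 2 / 1 ^ 2) with (p ^ 2 / s ^ 2) by (field; auto).
Qed.

Lemma gauss_pow_sq (s : R) (k : nat) (p : R) : s <> 0 ->
  gauss_pow s k p = (p ^ k * exp (- p ^ 2 / (2 * s ^ 2))) ^ 2.
Proof.
  intros Hs. unfold gauss_pow. rewrite Rpow_mult_distr, <- pow_mult, Nat.mul_comm.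
  f_equal. set (x := - p ^ 2 / (2 * s ^ 2)).
  replace (exp x ^ 2) with (exp x * exp x) by ring.
  rewrite <- exp_plus. unfold x. f_equal. field. auto.
Qed.

Lemma gauss_pow_le_exp (k : nat) (u : R) :
  gauss_pow 1 k u <= 2 ^ k * INR (Factorial.fact k) * exp (1 / 2) * exp (- u).
Proof.
  assert (Hfact := INR_fact_lt_0 k).
  assert (H2k : 0 < 2 ^ k) by (apply pow_lt; lra).
  assert (Hpow : u ^ (2 * k) <= 2 ^ k * INR (Factorial.fact k) * exp (u ^ 2 / 2)).
  { assert (Htaylor := pow_div_fact_le_exp (u ^ 2 / 2) k).
    replace (u ^ (2 * k)) with (2 ^ k * (u ^ 2 / 2) ^ k)
      by (rewrite pow_mult, <- Rpow_mult_distr; f_equal; field).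
    rewrite Rmult_assoc. apply Rmult_le_compat_l; [lra |].
    apply (Rmult_le_reg_r (/ INR (Factorial.fact k))); [now apply Rinv_0_lt_compat |].
    replace (INR (Factorial.fact k) * exp (u ^ 2 / 2) * / INR (Factorial.fact k))
      with (exp (u ^ 2 / 2)) by (field; lra).
    apply Htaylor. assert (0 <= u ^ 2) by apply pow2_ge_0. lra. }
  assert (Hexp : exp (u ^ 2 / 2) * exp (- (u ^ 2 / 1 ^ 2)) <= exp (1 / 2) * exp (- u)).
  { rewrite <- !exp_plus.
    assert (Hle : u ^ 2 / 2 + - (u ^ 2 / 1 ^ 2) <= 1 / 2 + - u).
    { assert (0 <= (u - 1) ^ 2) by apply pow2_ge_0. nra. }
    destruct Hle as [Hlt | ->]; [apply Rlt_le, exp_increasing, Hlt | lra]. }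
  unfold gauss_pow.
  apply Rle_trans with (2 ^ k * INR (Factorial.fact k) * exp (u ^ 2 / 2) * exp (- (u ^ 2 / 1 ^ 2))).
  - apply Rmult_le_compat_r; [apply Rlt_le, exp_pos | exact Hpow].
  - rewrite !(Rmult_assoc (2 ^ k * INR (Factorial.fact k))).
    apply Rmult_le_compat_l; [nra | exact Hexp].
Qed.

Lemma is_RInt_exp_opp (a b : R) : is_RInt (fun u => exp (- u)) a b (exp (- a) - exp (- b)).
Proof.
  assert (Hftc : is_RInt (fun u => exp (- u)) a b (minus (- exp (- b)) (- exp (- a)))).
  { apply (is_RInt_derive (V := R_CompleteNormedModule) (fun u => - exp (- u))).
    - intros x _. auto_derive; [auto | ring].
    - intros x _. apply (ex_derive_continuous (V := R_NormedModule)). auto_derive. auto. }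
  replace (exp (- a) - exp (- b)) with (minus (- exp (- b)) (- exp (- a)))
    by (unfold minus, plus, opp; simpl; ring).
  exact Hftc.
Qed.

Lemma RInt_gauss_pow_le (k : nat) (b : R) : 0 <= b ->
  RInt (gauss_pow 1 k) 0 b <= 2 ^ k * INR (Factorial.fact k) * exp (1 / 2).
Proof.
  intros Hb. set (D := 2 ^ k * INR (Factorial.fact k) * exp (1 / 2)).
  assert (HD : 0 < D).
  { apply Rmult_lt_0_compat; [apply Rmult_lt_0_compat | apply exp_pos].
    - apply pow_lt; lra.
    - apply INR_fact_lt_0. }
  assert (Hint := is_RInt_scal (V := R_NormedModule) _ _ _ D _ (is_RInt_exp_opp 0 b)).
  change (scal ?k ?v) with (k * v) in Hint. rewrite Ropp_0, exp_0 in Hint.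
  apply Rle_trans with (D * (1 - exp (- b))).
  - rewrite <- (is_RInt_unique _ _ _ _ Hint).
    apply RInt_le; [exact Hb | apply ex_RInt_gauss_pow | eexists; exact Hint |].
    intros x _. apply gauss_pow_le_exp.
  - assert (0 < exp (- b)) by apply exp_pos. nra.
Qed.

Definition gauss_moment (k : nat) : R :=
  RInt_gen (gauss_pow 1 k) (at_point 0) (Rbar_locally p_infty).

Lemma gauss_moment_spec (k : nat) :
  filterlim (RInt (gauss_pow 1 k) 0) (Rbar_locally p_infty) (locally (gauss_moment k)) /\
  (forall b, 0 <= b -> RInt (gauss_pow 1 k) 0 b <= gauss_moment k).
Proof.
  destruct (RInt_nonneg_bounded_cvg (gauss_pow 1 k) 0
             (2 ^ k * INR (Factorial.fact k) * exp (1 / 2))) as [l [Hlim Hle]].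
  - intros; apply gauss_pow_continuous.
  - intros; apply gauss_pow_ge_0.
  - apply RInt_gauss_pow_le.
  - assert (Hint : is_RInt_gen (gauss_pow 1 k) (at_point 0) (Rbar_locally p_infty) l)
      by exact (is_RInt_gen_lim_upper _ _ _ _ (filter_forall _ (ex_RInt_gauss_pow 1 k 0)) Hlim).
    replace (gauss_moment k) with l by (symmetry; now apply is_RInt_gen_unique).
    auto.
Qed.

Lemma gauss_moment_pos (k : nat) : 0 < gauss_moment k.
Proof.
  destruct (gauss_moment_spec k) as [_ Hle].
  apply Rlt_le_trans with (RInt (gauss_pow 1 k) 0 1); [| apply Hle; lra].
  apply RInt_gt_0; [lra | | intros; apply gauss_pow_continuous].
  intros x Hx. unfold gauss_pow. apply Rmult_lt_0_compat; [apply pow_lt; lra | apply exp_pos].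
Qed.

Lemma is_RInt_gen_gauss_pow (s : R) (k : nat) : 0 < s ->
  is_RInt_gen (gauss_pow s k) (Rbar_locally m_infty) (at_point 0)
    (s ^ (2 * k + 1) * gauss_moment k).
Proof.
  intros Hs. destruct (gauss_moment_spec k) as [Hlim _].
  assert (Hsubst : forall x,
    s ^ (2 * k + 1) * RInt (gauss_pow 1 k) 0 (- / s * x + 0) = RInt (gauss_pow s k) x 0).
  { intros x.
    assert (Hpt : forall p, gauss_pow s k p
                     = scal (- s ^ (2 * k + 1)) (scal (- / s) (gauss_pow 1 k (- / s * p + 0)))).
    { intros p. change (scal ?a (scal ?b ?v)) with (a * (b * v)).
      replace (- / s * p + 0) with (- (p / s)) by (field; lra).
      rewrite gauss_pow_opp, gauss_pow_scale, pow_add by lra. field. lra. }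
    assert (Hcomp := is_RInt_comp_lin (gauss_pow 1 k) (- / s) 0 x 0 _
                       (RInt_correct _ _ _ (ex_RInt_gauss_pow 1 k _ _))).
    rewrite (RInt_ext _ _ _ _ (fun p _ => Hpt p)).
    rewrite (RInt_scal (V := R_CompleteNormedModule)) by (eexists; exact Hcomp).
    erewrite (is_RInt_unique (V := R_CompleteNormedModule) _ x 0); [| exact Hcomp].
    replace (- / s * 0 + 0) with 0 by ring.
    rewrite <- (opp_RInt_swap (V := R_CompleteNormedModule)) by apply ex_RInt_gauss_pow.
    change (scal ?a ?b) with (a * b). change (opp ?a) with (- a). ring. }
  apply (is_RInt_gen_lim_lower (Rbar_locally m_infty)).
  - apply filter_forall. intros; apply ex_RInt_gauss_pow.
  - enough (Hlim' : is_lim (fun x => RInt (gauss_pow s k) x 0) m_infty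
                           (s ^ (2 * k + 1) * gauss_moment k)) by exact Hlim'.
    apply (is_lim_ext (fun x => s ^ (2 * k + 1) * RInt (gauss_pow 1 k) 0 (- / s * x + 0)));
      [intros x; now rewrite <- Hsubst |].
    apply (is_lim_scal_l _ _ _ (gauss_moment k)).
    apply (is_lim_comp_lin (RInt (gauss_pow 1 k) 0)).
    + replace (Rbar_plus (Rbar_mult (- / s) m_infty) 0) with p_infty; [exact Hlim |].
      assert (0 < / s) by (apply Rinv_0_lt_compat, Hs).
      simpl. destruct (Rle_dec 0 (- / s)) as [Hle | _]; [| reflexivity].
      exfalso. revert Hle. apply Rlt_not_le. lra.
    + apply Ropp_neq_0_compat, Rinv_neq_0_compat. lra.
Qed.

Lemma gauss_moment_S (k : nat) : gauss_moment (S k) = (2 * INR k + 1) / 2 * gauss_moment k.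
Proof.
  set (h := fun p => p ^ (2 * k + 1) * exp (- (p ^ 2 / 1 ^ 2))).
  assert (Hh' : forall p,
    is_derive h p ((2 * INR k + 1) * gauss_pow 1 k p - 2 * gauss_pow 1 (S k) p)).
  { intros p. unfold h, gauss_pow.
    replace (2 * S k)%nat with (S (S (2 * k))) by lia.
    replace (2 * k + 1)%nat with (S (2 * k)) by lia.
    assert (H2k : INR (2 * k) = 2 * INR k) by (rewrite mult_INR; reflexivity).
    set (j := (2 * k)%nat) in *. clearbody j.
    auto_derive; [auto |]. cbn [pred pow].
    change (match j with 0%nat => 1 | S _ => INR j + 1 end) with (INR (S j)).
    rewrite S_INR, H2k. unfold Rdiv. field. }
  assert (Hcont : forall p,
    continuous (fun p => (2 * INR k + 1) * gauss_pow 1 k p - 2 * gauss_pow 1 (S k) p) p).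
  { intros p. apply (ex_derive_continuous (V := R_NormedModule)).
    unfold gauss_pow. auto_derive. auto. }
  assert (Hdecay : is_lim h m_infty 0).
  { apply (is_lim_ext (fun p => p ^ (2 * k + 1) * exp (- (1 * p ^ 2)))).
    - intros p. unfold h. do 3 f_equal. field.
    - apply is_lim_pow_mul_exp_sq_m_infty. lra. }
  assert (Hftc := is_RInt_gen_Derive_m_infty h _ 0 0 Hh' Hcont Hdecay).
  assert (Hmoments := is_RInt_gen_minus _ _ _ _
    (is_RInt_gen_scal _ (2 * INR k + 1) _ (is_RInt_gen_gauss_pow 1 k Rlt_0_1))
    (is_RInt_gen_scal _ 2 _ (is_RInt_gen_gauss_pow 1 (S k) Rlt_0_1))).
  assert (Hval := eq_trans (eq_sym (is_RInt_gen_unique _ _ Hftc))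
                           (is_RInt_gen_unique _ _ Hmoments)).
  assert (Hh0 : h 0 = 0) by (unfold h; rewrite pow_i by lia; ring).
  rewrite Hh0, !pow1 in Hval.
  change (minus ?a ?b) with (a - b) in Hval. repeat change (scal ?a ?b) with (a * b) in Hval.
  lra.
Qed.

Lemma is_RInt_gen_gauss_pow_quadratic (s a b c : R) (k : nat) : 0 < s ->
  is_RInt_gen (fun p => a * gauss_pow s k p + b * gauss_pow s (S k) p + c * gauss_pow s (S (S k)) p)
    (Rbar_locally m_infty) (at_point 0)
    ((a + b * (2 * INR k + 1) * s ^ 2 / 2 + c * (2 * INR k + 1) * (2 * INR k + 3) * s ^ 4 / 4)
     * (s ^ (2 * k + 1) * gauss_moment k)).
Proof.
  intros Hs.
  assert (Hsum := is_RInt_gen_plus _ _ _ _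
    (is_RInt_gen_plus _ _ _ _ (is_RInt_gen_scal _ a _ (is_RInt_gen_gauss_pow s k Hs))
                              (is_RInt_gen_scal _ b _ (is_RInt_gen_gauss_pow s (S k) Hs)))
    (is_RInt_gen_scal _ c _ (is_RInt_gen_gauss_pow s (S (S k)) Hs))).
  rewrite !gauss_moment_S in Hsum.
  replace (2 * S (S k) + 1)%nat with (2 * k + 1 + 4)%nat in Hsum by lia.
  replace (2 * S k + 1)%nat with (2 * k + 1 + 2)%nat in Hsum by lia.
  rewrite (pow_add s (2 * k + 1) 4), (pow_add s (2 * k + 1) 2), S_INR in Hsum.
  repeat change (plus ?x ?y) with (x + y) in Hsum. repeat change (scal ?x ?y) with (x * y) in Hsum.
  replace ((a + b * (2 * INR k + 1) * s ^ 2 / 2 + c * (2 * INR k + 1) * (2 * INR k + 3) * s ^ 4 / 4)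
           * (s ^ (2 * k + 1) * gauss_moment k))
    with (a * (s ^ (2 * k + 1) * gauss_moment k)
          + b * (s ^ (2 * k + 1) * s ^ 2 * ((2 * INR k + 1) / 2 * gauss_moment k))
          + c * (s ^ (2 * k + 1) * s ^ 4
                 * ((2 * (INR k + 1) + 1) / 2 * ((2 * INR k + 1) / 2 * gauss_moment k))))
    by field.
  exact Hsum.
Qed.

(** * The Gamma function at half-integers *)

Definition Gamma_integrand (a t : R) : R := Rpower t (a - 1) * exp (- t).

Lemma ex_RInt_Gamma_integrand (a b c : R) : 0 < b -> 0 < c -> ex_RInt (Gamma_integrand a) b c.
Proof.
  intros Hb Hc. apply (ex_RInt_continuous (V := R_CompleteNormedModule)). intros t [Ht _].
  apply (ex_derive_continuous (V := R_NormedModule)). unfold Gamma_integrand, Rpower. auto_derive.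
  eapply Rlt_le_trans; [| exact Ht]. now apply Rmin_glb_lt.
Qed.

Lemma Gamma_integrand_sq (k : nat) (y : R) : 0 < y ->
  2 * y * Gamma_integrand (INR k + 1 / 2) (y ^ 2) = 2 * gauss_pow 1 k y.
Proof.
  intros Hy. unfold Gamma_integrand, gauss_pow.
  assert (Hpow : y * Rpower (y ^ 2) (INR k + 1 / 2 - 1) = y ^ (2 * k)).
  { rewrite <- (Rpower_1 y) at 1 by exact Hy.
    rewrite <- Rpower_pow, Rpower_mult, <- Rpower_plus, <- Rpower_pow by exact Hy.
    f_equal. rewrite mult_INR. simpl. field. }
  replace (y ^ 2 / 1 ^ 2) with (y ^ 2) by field.
  rewrite <- Hpow. ring.
Qed.

Lemma RInt_Gamma_integrand (k : nat) (a b : R) : 0 < a -> 0 < b ->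
  RInt (Gamma_integrand (INR k + 1 / 2)) a b = 2 * RInt (gauss_pow 1 k) (sqrt a) (sqrt b).
Proof.
  intros Ha Hb.
  assert (Hsa := sqrt_lt_R0 a Ha). assert (Hsb := sqrt_lt_R0 b Hb).
  assert (Hpos : forall y, Rmin (sqrt a) (sqrt b) <= y <= Rmax (sqrt a) (sqrt b) -> 0 < y).
  { intros y [Hy _]. eapply Rlt_le_trans; [| exact Hy]. now apply Rmin_glb_lt. }
  rewrite <- (pow2_sqrt a), <- (pow2_sqrt b) at 1 by lra.
  rewrite <- (RInt_comp (V := R_CompleteNormedModule) _ (fun u => u ^ 2) (fun u => 2 * u)).
  - rewrite <- (RInt_scal (V := R_CompleteNormedModule)) by apply ex_RInt_gauss_pow.
    apply RInt_ext. intros y Hy. apply Gamma_integrand_sq, Hpos. lra.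
  - intros y Hy. apply (ex_derive_continuous (V := R_NormedModule)).
    unfold Gamma_integrand, Rpower. auto_derive. apply pow_lt, Hpos, Hy.
  - intros y _. split; [auto_derive; [auto | ring] |].
    apply (ex_derive_continuous (V := R_NormedModule)). auto_derive. auto.
Qed.

Lemma is_RInt_gen_Gamma_integrand_0_1 (k : nat) :
  is_RInt_gen (Gamma_integrand (INR k + 1 / 2)) (at_right 0) (at_point 1)
    (2 * RInt (gauss_pow 1 k) 0 1).
Proof.
  apply (is_RInt_gen_lim_lower (at_right 0)).
  - exists (mkposreal 1 Rlt_0_1). intros a _ Ha. apply ex_RInt_Gamma_integrand; lra.
  - apply (filterlim_ext_loc (fun a => 2 * RInt (gauss_pow 1 k) (sqrt a) 1)).
    { exists (mkposreal 1 Rlt_0_1). intros a _ Ha.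
      rewrite RInt_Gamma_integrand, sqrt_1 by lra. reflexivity. }
    apply (filterlim_comp _ _ _ (fun a => RInt (gauss_pow 1 k) (sqrt a) 1) (fun x => 2 * x) _
             (locally (RInt (gauss_pow 1 k) 0 1))).
    2: apply (ex_derive_continuous (V := R_NormedModule)); auto_derive; auto.
    assert (Hsqrt : filterlim sqrt (at_right 0) (locally 0)).
    { pose proof (continuous_sqrt 0) as Hc. unfold continuous in Hc. rewrite sqrt_0 in Hc.
      exact (filterlim_filter_le_1 _ (filter_le_within (F := locally 0) _) Hc). }
    apply (filterlim_comp _ _ _ sqrt (fun u => RInt (gauss_pow 1 k) u 1) _ _ _ Hsqrt).
    apply (continuous_RInt_2 (V := R_NormedModule) (gauss_pow 1 k) 0 1).
    apply filter_forall. intros u.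
    apply (RInt_correct (V := R_CompleteNormedModule)), ex_RInt_gauss_pow.
Qed.

Lemma is_RInt_gen_Gamma_integrand_1_p_infty (k : nat) :
  is_RInt_gen (Gamma_integrand (INR k + 1 / 2)) (at_point 1) (Rbar_locally p_infty)
    (2 * (gauss_moment k - RInt (gauss_pow 1 k) 0 1)).
Proof.
  destruct (gauss_moment_spec k) as [Hlim _].
  apply (is_RInt_gen_lim_upper (Rbar_locally p_infty)).
  - exists 0. intros b Hb. apply ex_RInt_Gamma_integrand; lra.
  - apply (filterlim_ext_loc
             (fun b => 2 * (RInt (gauss_pow 1 k) 0 (sqrt b) - RInt (gauss_pow 1 k) 0 1))).
    { exists 0. intros b Hb. rewrite RInt_Gamma_integrand, sqrt_1 by lra.
      rewrite <- (RInt_Chasles _ 0 1 (sqrt b)) by apply ex_RInt_gauss_pow.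
      change (plus ?x ?y) with (x + y). ring. }
    apply (filterlim_comp _ _ _ (fun b => RInt (gauss_pow 1 k) 0 (sqrt b))
             (fun x => 2 * (x - RInt (gauss_pow 1 k) 0 1)) _ (locally (gauss_moment k))).
    + exact (filterlim_comp _ _ _ sqrt _ _ _ _ filterlim_sqrt_p Hlim).
    + apply (ex_derive_continuous (V := R_NormedModule)
               (fun x => 2 * (x - RInt (gauss_pow 1 k) 0 1))).
      auto_derive. auto.
Qed.

Lemma Gamma_half_integer (k : nat) : Gamma (INR k + 1 / 2) = 2 * gauss_moment k.
Proof.
  assert (Hline := is_RInt_gen_Chasles _ _ _ _
                     (is_RInt_gen_Gamma_integrand_0_1 k) (is_RInt_gen_Gamma_integrand_1_p_infty k)).
  change (plus ?x ?y) with (x + y) in Hline.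
  replace (2 * RInt (gauss_pow 1 k) 0 1 + 2 * (gauss_moment k - RInt (gauss_pow 1 k) 0 1))
    with (2 * gauss_moment k) in Hline by ring.
  apply is_RInt_gen_unique. exact Hline.
Qed.

Lemma N_G_sq (s : R) (n : nat) : 0 < s ->
  N_G s n ^ 2 * (s ^ (2 * n + 1) * gauss_moment n) = 1.
Proof.
  intros Hs. assert (HK := gauss_moment_pos n).
  assert (Hsn : 0 < s ^ (2 * n + 1)) by (apply pow_lt, Hs).
  unfold N_G. rewrite Gamma_half_integer, pow2_sqrt.
  - field. split; lra.
  - apply Rlt_le, Rdiv_lt_0_compat; [lra |]. apply Rmult_lt_0_compat; [exact Hsn | lra].
Qed.

(** * The state psi_n *)

Lemma psi_nonneg_arg (s : R) (n : nat) (p : R) : 0 <= p -> psi s n p = 0.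
Proof. intros Hp. unfold psi, Heaviside. destruct (Rlt_dec 0 (- p)); [lra | ring]. Qed.

Lemma psi_neg_arg (s : R) (n : nat) (p : R) : p < 0 ->
  psi s n p = N_G s n * p ^ n * exp (- p ^ 2 / (2 * s ^ 2)).
Proof. intros Hp. unfold psi, Heaviside. destruct (Rlt_dec 0 (- p)); [ring | lra]. Qed.

Lemma Derive_psi_pos_arg (s : R) (n : nat) (p : R) : 0 < p -> Derive (psi s n) p = 0.
Proof.
  intros Hp. rewrite (Derive_ext_loc _ (fun _ => 0)); [apply Derive_const |].
  apply (filter_imp (fun q => 0 < q)); [| exact (open_gt 0 p Hp)].
  intros q Hq. apply psi_nonneg_arg. lra.
Qed.

Section StateDerivatives.

Variables (s : R) (m : nat).
Hypothesis Hs : 0 < s.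

Let N := N_G s (S (S m)).
Let E (p : R) := exp (- p ^ 2 / (2 * s ^ 2)).

Lemma Derive_psi_neg_arg (p : R) : p < 0 ->
  Derive (psi s (S (S m))) p = N * ((INR m + 2) * p ^ S m - p ^ S (S (S m)) / s ^ 2) * E p.
Proof.
  intros Hp.
  rewrite (Derive_ext_loc _ (fun q => N * q ^ S (S m) * E q)).
  - apply is_derive_unique. unfold E. auto_derive; [auto |].
    cbn [pred pow]. change (match m with 0%nat => 1 | S _ => INR m + 1 end) with (INR (S m)).
    rewrite S_INR. unfold Rdiv. field. lra.
  - apply (filter_imp (fun q => q < 0)); [| exact (open_lt 0 p Hp)].
    intros q Hq. now apply psi_neg_arg.
Qed.

Lemma Derive2_psi_neg_arg (p : R) : p < 0 ->
  Derive (Derive (psi s (S (S m)))) p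
  = N * ((INR m + 2) * (INR m + 1) * p ^ m - (2 * INR m + 5) * p ^ S (S m) / s ^ 2
         + p ^ S (S (S (S m))) / s ^ 4) * E p.
Proof.
  intros Hp.
  rewrite (Derive_ext_loc _ (fun q => N * ((INR m + 2) * q ^ S m - q ^ S (S (S m)) / s ^ 2) * E q)).
  - apply is_derive_unique. unfold E. auto_derive; [repeat split; auto; apply pow_nonzero; lra |].
    cbn [pred pow]. change (match m with 0%nat => 1 | S _ => INR m + 1 end) with (INR (S m)).
    rewrite S_INR. unfold Rdiv. field. lra.
  - apply (filter_imp (fun q => q < 0)); [| exact (open_lt 0 p Hp)].
    intros q Hq. now apply Derive_psi_neg_arg.
Qed.

End StateDerivatives.

Section StateIntegrals.

Variables (s : R) (m : nat).
Hypothesis Hs : 0 < s.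

Lemma N_G_sq_eq :
  N_G s (S (S m)) ^ 2 = 2 / ((2 * INR m + 3) * s ^ 2) / (s ^ (2 * S m + 1) * gauss_moment (S m)).
Proof.
  assert (Hnorm := N_G_sq s (S (S m)) Hs).
  rewrite gauss_moment_S, S_INR in Hnorm.
  replace (2 * S (S m) + 1)%nat with (2 * S m + 1 + 2)%nat in Hnorm by lia.
  rewrite pow_add in Hnorm.
  assert (0 < s ^ (2 * S m + 1)) by (apply pow_lt, Hs).
  assert (0 < gauss_moment (S m)) by apply gauss_moment_pos.
  assert (0 <= INR m) by apply pos_INR.
  rewrite <- (Rmult_1_l (2 / ((2 * INR m + 3) * s ^ 2))), <- Hnorm.
  field. repeat split; lra.
Qed.

Lemma int_R_psi_sq : int_R (fun p => psi s (S (S m)) p ^ 2) = 1.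
Proof.
  apply int_R_supported_neg; [| intros p Hp; rewrite psi_nonneg_arg by lra; ring].
  rewrite <- (N_G_sq s (S (S m)) Hs).
  apply (is_RInt_gen_ext_lt (fun p => scal (N_G s (S (S m)) ^ 2) (gauss_pow s (S (S m)) p))).
  - intros p Hp. change (scal ?x ?y) with (x * y).
    rewrite psi_neg_arg, gauss_pow_sq by lra. ring.
  - exact (is_RInt_gen_scal _ _ _ (is_RInt_gen_gauss_pow s _ Hs)).
Qed.

Lemma int_R_A_integrand1 (alpha tau : R) :
  int_R (A_integrand1 alpha s (S (S m)) tau)
    = alpha ^ 4 * tau ^ 2 * N_G s (S (S m)) ^ 2 * (s ^ (2 * m + 1) * gauss_moment m)
  /\ ex_int_R (A_integrand1 alpha s (S (S m)) tau).
Proof.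
  apply int_R_supported_neg;
    [| intros p Hp; unfold A_integrand1; rewrite psi_nonneg_arg by lra; ring].
  apply (is_RInt_gen_ext_lt
           (fun p => scal (alpha ^ 4 * tau ^ 2 * N_G s (S (S m)) ^ 2) (gauss_pow s m p))).
  - intros p Hp. change (scal ?x ?y) with (x * y). unfold A_integrand1.
    rewrite psi_neg_arg, gauss_pow_sq by lra. cbn [pow]. field. lra.
  - exact (is_RInt_gen_scal _ _ _ (is_RInt_gen_gauss_pow s _ Hs)).
Qed.

Lemma int_R_A_integrand2 :
  int_R (A_integrand2 s (S (S m))) = (4 * INR (S (S m)) - 1) / ((4 * INR (S (S m)) - 2) * s ^ 2)
  /\ ex_int_R (A_integrand2 s (S (S m))).
Proof.
  apply int_R_supported_neg;
    [| intros p Hp; unfold A_integrand2; rewrite Derive_psi_pos_arg by lra; ring].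
  set (N := N_G s (S (S m))).
  set (a := N ^ 2 * (INR m + 2) ^ 2). set (b := - (2 * N ^ 2 * (INR m + 2) / s ^ 2)).
  set (c := N ^ 2 / s ^ 4).
  replace ((4 * INR (S (S m)) - 1) / ((4 * INR (S (S m)) - 2) * s ^ 2))
    with ((a + b * (2 * INR (S m) + 1) * s ^ 2 / 2
           + c * (2 * INR (S m) + 1) * (2 * INR (S m) + 3) * s ^ 4 / 4)
          * (s ^ (2 * S m + 1) * gauss_moment (S m))).
  - apply (is_RInt_gen_ext_lt (fun p => a * gauss_pow s (S m) p + b * gauss_pow s (S (S m)) p
                                          + c * gauss_pow s (S (S (S m))) p)).
    + intros p Hp. unfold A_integrand2. rewrite Derive_psi_neg_arg, !gauss_pow_sq by lra.
      unfold a, b, c, N. cbn [pow]. field. lra.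
    + apply is_RInt_gen_gauss_pow_quadratic, Hs.
  - assert (0 < s ^ (2 * S m + 1)) by (apply pow_lt, Hs).
    assert (0 < gauss_moment (S m)) by apply gauss_moment_pos.
    assert (0 <= INR m) by apply pos_INR.
    unfold a, b, c, N. rewrite N_G_sq_eq, !S_INR. field. repeat split; lra.
Qed.

Lemma int_R_psi_Derive2_psi :
  int_R (fun p => psi s (S (S m)) p * Derive (Derive (psi s (S (S m)))) p)
    = - ((4 * INR (S (S m)) - 1) / ((4 * INR (S (S m)) - 2) * s ^ 2)).
Proof.
  apply int_R_supported_neg; [| intros p Hp; rewrite psi_nonneg_arg by lra; ring].
  set (N := N_G s (S (S m))).
  set (a := N ^ 2 * (INR m + 2) * (INR m + 1)). set (b := - (N ^ 2 * (2 * INR m + 5) / s ^ 2)).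
  set (c := N ^ 2 / s ^ 4).
  replace (- ((4 * INR (S (S m)) - 1) / ((4 * INR (S (S m)) - 2) * s ^ 2)))
    with ((a + b * (2 * INR (S m) + 1) * s ^ 2 / 2
           + c * (2 * INR (S m) + 1) * (2 * INR (S m) + 3) * s ^ 4 / 4)
          * (s ^ (2 * S m + 1) * gauss_moment (S m))).
  - apply (is_RInt_gen_ext_lt (fun p => a * gauss_pow s (S m) p + b * gauss_pow s (S (S m)) p
                                          + c * gauss_pow s (S (S (S m))) p)).
    + intros p Hp. rewrite psi_neg_arg, Derive2_psi_neg_arg, !gauss_pow_sq by lra.
      unfold a, b, c, N. cbn [pow]. field. lra.
    + apply is_RInt_gen_gauss_pow_quadratic, Hs.
  - assert (0 < s ^ (2 * S m + 1)) by (apply pow_lt, Hs).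
    assert (0 < gauss_moment (S m)) by apply gauss_moment_pos.
    assert (0 <= INR m) by apply pos_INR.
    unfold a, b, c, N. rewrite N_G_sq_eq, !S_INR. field. repeat split; lra.
Qed.

Lemma int_R_psi_Derive_psi :
  int_R (fun p => psi s (S (S m)) p * Derive (psi s (S (S m))) p) = 0.
Proof.
  apply int_R_supported_neg; [| intros p Hp; rewrite psi_nonneg_arg by lra; ring].
  set (N := N_G s (S (S m))).
  set (f := fun p => N ^ 2 / 2 * gauss_pow s (S (S m)) p).
  set (df := fun p =>
    N ^ 2 * ((INR m + 2) * p * gauss_pow s (S m) p - p * gauss_pow s (S (S m)) p / s ^ 2)).
  assert (Hf' : forall p, is_derive f p (df p)).
  { intros p. unfold f, df, gauss_pow.
    replace (2 * S (S m))%nat with (S (S (2 * S m))) by lia.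
    assert (H2m : INR (2 * S m) = 2 * INR m + 2)
      by (rewrite mult_INR, (S_INR m); simpl (INR 2); ring).
    set (j := (2 * S m)%nat) in *. clearbody j.
    auto_derive; [auto |]. cbn [pred pow].
    change (match j with 0%nat => 1 | S _ => INR j + 1 end) with (INR (S j)).
    rewrite S_INR, H2m. unfold Rdiv. field. lra. }
  assert (Hdf : forall p, continuous df p).
  { intros p. apply (ex_derive_continuous (V := R_NormedModule)).
    unfold df, gauss_pow. auto_derive. auto. }
  assert (Hdecay : is_lim f m_infty 0).
  { replace (Finite 0) with (Rbar_mult (N ^ 2 / 2) 0) by (simpl; f_equal; ring).
    apply is_lim_scal_l.
    apply (is_lim_ext (fun p => p ^ (2 * S (S m)) * exp (- (/ s ^ 2 * p ^ 2)))).
    - intros p. unfold gauss_pow. do 3 f_equal. field. lra.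
    - apply is_lim_pow_mul_exp_sq_m_infty, Rinv_0_lt_compat, pow_lt, Hs. }
  assert (Hint := is_RInt_gen_Derive_m_infty f df 0 0 Hf' Hdf Hdecay).
  replace (f 0 - 0) with 0 in Hint by (unfold f, gauss_pow; rewrite pow_i by lia; ring).
  apply (is_RInt_gen_ext_lt df); [| exact Hint].
  intros p Hp. rewrite psi_neg_arg, Derive_psi_neg_arg by lra. unfold df, N.
  rewrite !gauss_pow_sq by lra. cbn [pow]. field. lra.
Qed.

Lemma A_n_eq (alpha hbar tau : R) :
  A_n alpha hbar s (S (S m)) tau
  = 4 * PI * (alpha ^ 4 * tau ^ 2 * N_G s (S (S m)) ^ 2 * (s ^ (2 * m + 1) * gauss_moment m))
    + 4 * PI * hbar ^ 2 * ((4 * INR (S (S m)) - 1) / ((4 * INR (S (S m)) - 2) * s ^ 2)).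
Proof.
  unfold A_n. now rewrite (proj1 (int_R_A_integrand1 alpha tau)), (proj1 int_R_A_integrand2).
Qed.

Lemma A_n_ge_A_n_0 (alpha hbar tau : R) :
  A_n alpha hbar s (S (S m)) 0 <= A_n alpha hbar s (S (S m)) tau.
Proof.
  rewrite !A_n_eq. apply Rplus_le_compat_r, Rmult_le_compat_l; [assert (HPI := PI_RGT_0); lra |].
  replace (alpha ^ 4 * 0 ^ 2 * N_G s (S (S m)) ^ 2 * _) with 0 by ring.
  apply Rmult_le_pos; [apply Rmult_le_pos; [apply Rmult_le_pos |] | apply Rmult_le_pos].
  - change 4%nat with (2 * 2)%nat. rewrite pow_mult. apply pow2_ge_0.
  - apply pow2_ge_0.
  - apply pow2_ge_0.
  - apply pow_le. lra.
  - apply Rlt_le, gauss_moment_pos.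
Qed.

Lemma expect_a_eq_0 (hbar : R) : expect_a hbar s (S (S m)) = 0%C.
Proof. unfold expect_a. now rewrite int_R_psi_Derive_psi, Rmult_0_r. Qed.

Lemma Re_Delta_a_sq (hbar : R) :
  Re (Delta_a_sq hbar s (S (S m)))
  = hbar ^ 2 * ((4 * INR (S (S m)) - 1) / ((4 * INR (S (S m)) - 2) * s ^ 2)).
Proof.
  unfold Delta_a_sq, expect_a2. rewrite expect_a_eq_0, int_R_psi_Derive2_psi.
  cbn [Re Cminus Cplus Copp Cmult RtoC fst snd]. ring.
Qed.

Lemma Im_Delta_a_sq (hbar : R) : Im (Delta_a_sq hbar s (S (S m))) = 0.
Proof.
  unfold Delta_a_sq, expect_a2. rewrite expect_a_eq_0.
  cbn [Im Cminus Cplus Copp Cmult RtoC fst snd]. ring.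
Qed.

End StateIntegrals.

Theorem mainTheorem3 (alpha hbar sigma : R) (n : nat) :
  0 < alpha -> 0 < hbar -> 0 < sigma -> (2 <= n)%nat ->
  (* normalization *)
  int_R (fun p => (psi sigma n p) ^ 2) = 1 /\
  (* A_n(tau) is finite for every tau *)
  (forall tau, ex_int_R (A_integrand1 alpha sigma n tau)) /\
  ex_int_R (A_integrand2 sigma n) /\
  (* minimum at tau = 0 *)
  (forall tau, A_n alpha hbar sigma n 0 <= A_n alpha hbar sigma n tau) /\
  (* value at tau = 0 *)
  A_n alpha hbar sigma n 0
    = 4 * PI * hbar ^ 2 / sigma ^ 2 * ((4 * INR n - 1) / (4 * INR n - 2)) /\
  (* identification with the variance of a-hat *)
  expect_a hbar sigma n = 0%C /\
  Im (Delta_a_sq hbar sigma n) = 0 /\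
  A_n alpha hbar sigma n 0 = 4 * PI * Re (Delta_a_sq hbar sigma n) /\
  sqrt (Re (Delta_a_sq hbar sigma n))
    = hbar / sigma * sqrt ((4 * INR n - 1) / (4 * INR n - 2)).
Proof.
  intros _ Hh Hs Hn.
  destruct n as [|[|m]]; [lia | lia |].
  assert (Hn2 : 0 < 4 * INR (S (S m)) - 2)
    by (rewrite !S_INR; assert (0 <= INR m) by apply pos_INR; lra).
  split; [exact (int_R_psi_sq sigma m Hs) |].
  split; [intros tau; exact (proj2 (int_R_A_integrand1 sigma m Hs alpha tau)) |].
  split; [exact (proj2 (int_R_A_integrand2 sigma m Hs)) |].
  split; [intros tau; exact (A_n_ge_A_n_0 sigma m Hs alpha hbar tau) |].
  split; [rewrite A_n_eq by exact Hs; field; lra |].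
  split; [exact (expect_a_eq_0 sigma m Hs hbar) |].
  split; [exact (Im_Delta_a_sq sigma m Hs hbar) |].
  split; [rewrite A_n_eq, Re_Delta_a_sq by exact Hs; ring |].
  rewrite Re_Delta_a_sq by exact Hs.
  replace (hbar ^ 2 * _)
    with ((hbar / sigma) ^ 2 * ((4 * INR (S (S m)) - 1) / (4 * INR (S (S m)) - 2))) by (field; lra).
  rewrite sqrt_mult_alt, sqrt_pow2 by (try apply pow2_ge_0; apply Rlt_le, Rdiv_lt_0_compat; lra).
  reflexivity.
Qed.
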